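(* Let $\nu\in\mathcal{P}_2(\mathbb{R}^2)$, $\gamma\in\Gamma(\nu)$, and $\mu$ the $x$-marginal of $\gamma$. For every $G\in\mathfrak{M}$, $$\gamma\big(\phi_G(y)-c(x,y)\,\big|\,x\big)\le\phi_G(x)\le0,\qquad\gamma\text{-a.s.},$$ and consequently $$\int\phi_G(y)\,d\nu-\int c(x,y)\,d\gamma\le\int\phi_G(x)\,d\mu\le0.$$
   Context: $c(x,y)=(x_1-y_1)(x_2-y_2)$ for $x,y\in\mathbb{R}^2$. $\mathcal{P}_2(\mathbb{R}^d)$: Borel probability measures with finite second moment. $\Gamma(\nu)$: the set of $\gamma\in\mathcal{P}_2(\mathbb{R}^2\times\mathbb{R}^2)$ (points $(x,y)$) with $y$-marginal $\nu$ and $\gamma(y|x)=x$. For a function $f$, $\gamma(f|x)$ denotes the conditional expectation of $f$ given the coordinate $x$ under $\gamma$. $\mathfrak{M}$: family of maximal monotone sets $G\subset\mathbb{R}^2$ (monotone: $c(r,s)\ge0$ for $r,s\in G$; maximal: not a proper subset of a monotone set). $\phi_G(y)=\inf_{x\in G}c(x,y)\in[-\infty,0]$. *)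

From HB Require Import structures.
From mathcomp Require Import all_boot all_order all_algebra.
From mathcomp Require Import all_classical all_reals all_analysis.
From mathcomp Require Import measurable_realfun.
Set Implicit Arguments. Unset Strict Implicit. Unset Printing Implicit Defensive.
Import Order.TTheory GRing.Theory Num.Theory.
Local Open Scope classical_set_scope.
Local Open Scope ring_scope.

(* Points of R^2 are pairs (x1, x2) : R * R, with the product (= Borel)
   sigma-algebra; couples (x, y) are elements of (R * R) * (R * R). *)

Definition cst {R : realType} (x y : R * R) : R := (x.1 - y.1) * (x.2 - y.2).

Definition monotone_set {R : realType} (G : set (R * R)) : Prop :=
  forall r s, G r -> G s -> 0 <= cst r s.

Definition maximal_monotone {R : realType} (G : set (R * R)) : Prop :=
  monotone_set G /\ forall H, monotone_set H -> G `<=` H -> H = G.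

Definition phiG {R : realType} (G : set (R * R)) (y : R * R) : \bar R :=
  ereal_inf [set (cst x y)%:E | x in G].

Definition P2_1 {R : realType} (nu : probability (R * R)%type R) : Prop :=
  nu.-integrable setT (fun y : R * R => (y.1 ^+ 2 + y.2 ^+ 2)%:E).

Definition P2_2 {R : realType} (g : probability ((R * R) * (R * R))%type R) : Prop :=
  g.-integrable setT
    (fun p : (R * R) * (R * R) =>
       (p.1.1 ^+ 2 + p.1.2 ^+ 2 + p.2.1 ^+ 2 + p.2.2 ^+ 2)%:E).

(* h is a version of the conditional expectation gamma(f | x), where x is the
   first coordinate of (x,y): h is Borel measurable on R^2 and
   int_{x in A} f d gamma = int_{x in A} h(x) d gamma for every Borel A. *)
Definition cond_exp_x {R : realType} (g : probability ((R * R) * (R * R))%type R)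
  (f : (R * R) * (R * R) -> \bar R) (h : R * R -> \bar R) : Prop :=
  measurable_fun [set: (R * R)%type] h /\
  forall A : set (R * R), measurable A ->
    (\int[g]_(p in A `*` setT) f p = \int[g]_(p in A `*` setT) h p.1)%E.

(* Gamma(nu): gamma in P_2, y-marginal nu, and gamma(y | x) = x *)
Definition in_Gamma {R : realType} (nu : probability (R * R)%type R)
  (g : probability ((R * R) * (R * R))%type R) : Prop :=
  P2_2 g /\
  (forall B : set (R * R), measurable B -> nu B = g (snd @^-1` B)) /\
  cond_exp_x g (fun p => (p.2.1)%:E) (fun x => (x.1)%:E) /\
  cond_exp_x g (fun p => (p.2.2)%:E) (fun x => (x.2)%:E).

Definition cpair {R : realType} (p : (R * R) * (R * R)) : \bar R :=
  (cst p.1 p.2)%:E.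

Definition phiG_minus_c {R : realType} (G : set (R * R))
  (p : (R * R) * (R * R)) : \bar R :=
  (phiG G p.2 - cpair p)%E.

(* For z in G we have phi_G(y) <= c(z,y), and
     c(z,y) - c(x,y) = c(z,x) + (x1 - z1)(y2 - x2) + (x2 - z2)(y1 - x1).
   Since gamma(y | x) = x, the last two terms have zero conditional expectation
   given x, also when z = s(x) is a measurable selection of linear growth: the
   coefficient is approximated uniformly by step functions of x, for which this
   is the defining property of the conditional expectation on each level set.
   Hence gamma(phi_G(y) - c(x,y) | x) <= c(z,x) a.s. for every z in a countable
   dense subset of G, and the infimum over z gives phi_G(x).  For the integrated
   inequality take z = s_N(x) minimizing c(., x) over the first N points of that
   subset: then  int phi_G(y) - int c <= int c(s_N(x), x), and the right-hand
   side decreases to int phi_G(x) by monotone convergence.  Finally phi_G <= 0,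
   for if phi_G(x) > 0 then G + {x} would still be monotone. *)

From HB Require Import structures.
From mathcomp Require Import all_boot all_order all_algebra.
From mathcomp Require Import all_classical all_reals all_analysis.
From mathcomp Require Import measurable_realfun.
From mathcomp Require Import ring lra.
(* Imported last, so that [cst] is the cost of Defs and not the constant function. *)
From Pilot Require Import Defs.
Set Implicit Arguments. Unset Strict Implicit. Unset Printing Implicit Defensive.
Import Order.TTheory GRing.Theory Num.Theory.
Local Open Scope classical_set_scope.
Local Open Scope ring_scope.

(** * Real inequalities *)

Lemma normrM_le_sqr (R : realDomainType) (a b : R) : `|a * b| <= a ^+ 2 + b ^+ 2.
Proof.
rewrite normrM -(real_normK (num_real a)) -(real_normK (num_real b)).
have := normr_ge0 a; have := normr_ge0 b; set u := `|a|; set v := `|b|; nra.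
Qed.

Lemma normr_le_sqrD1 (R : realDomainType) (a : R) : `|a| <= 1 + a ^+ 2.
Proof.
rewrite -(real_normK (num_real a)); have := normr_ge0 a.
have := sqr_ge0 (`|a| - 1); set u := `|a|; nra.
Qed.

Lemma sqrB_le (R : realDomainType) (a b : R) : (a - b) ^+ 2 <= 2 * a ^+ 2 + 2 * b ^+ 2.
Proof. have := sqr_ge0 (a + b); nra. Qed.

Lemma exists_invn_lt (R : realType) (t : R) : 0 < t -> exists k, k.+1%:R^-1 < t.
Proof.
move=> t0; have [N _ hN] := near_infty_natSinv_lt (PosNum t0).
by exists N; apply: hN => /=.
Qed.

Lemma le0_of_le_invn (R : realType) (r C : R) :
  (forall m, r <= m.+1%:R^-1 * C) -> r <= 0.
Proof.
move=> le_r; rewrite leNgt; apply/negP => r0.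
have C0 : 0 < C by apply: lt_le_trans r0 _; have := le_r 0%N; rewrite invr1 mul1r.
have [k] := exists_invn_lt (divr_gt0 r0 C0).
rewrite -(ltr_pM2r C0) mulfVK ?gt_eqF // => /(le_lt_trans (le_r k)).
by rewrite ltxx.
Qed.

Lemma truncn_div_approx (R : realType) (m : nat) (y : R) : 0 <= y ->
  let t := (Num.truncn (m.+1%:R * y))%:R / m.+1%:R in
  0 <= t <= y /\ y - t <= m.+1%:R^-1.
Proof.
move=> y0 t; have m0 : 0 < m.+1%:R :> R by rewrite ltr0n.
have /andP[lo hi] := truncn_itv (mulr_ge0 (ltW m0) y0).
have tE : t * m.+1%:R = (Num.truncn (m.+1%:R * y))%:R by rewrite divfK ?gt_eqF.
split.
  by rewrite /t divr_ge0 ?ler0n ?(ltW m0) //= ler_pdivrMr // (mulrC y); exact: lo.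
rewrite -(ler_pM2r m0) mulVf ?gt_eqF // mulrBl tE (mulrC y) lerBlDl.
by apply/ltW/(lt_le_trans hi); rewrite natr1.
Qed.

(** * Integration *)

Section integral_le.
Local Open Scope ereal_scope.
Context d (T : measurableType d) (R : realType) (mu : measure T R).
Implicit Types (D : set T) (f g : T -> \bar R).

Lemma le_measurable_integral D f g : measurable D ->
  measurable_fun D f -> measurable_fun D g -> {in D, forall x, f x <= g x} ->
  \int[mu]_(x in D) f x <= \int[mu]_(x in D) g x.
Proof.
move=> mD mf mg fg; rewrite integralE [leRHS]integralE leeB //.
  apply: ge0_le_integral => //; try exact: measurable_funepos.
  by move=> x /mem_set; exact: funepos_le.
apply: ge0_le_integral => //; try exact: measurable_funeneg.
by move=> x /mem_set; exact: funeneg_le.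
Qed.

Lemma le0_integralE D f : (forall x, D x -> f x <= 0) ->
  \int[mu]_(x in D) f x = - \int[mu]_(x in D) - f x.
Proof.
move=> f0; rewrite -integral_ge0N; last by move=> x Dx; rewrite oppe_ge0 f0.
by apply: eq_integral => x _; rewrite oppeK.
Qed.

Lemma integral_le0 D f : (forall x, D x -> f x <= 0) -> \int[mu]_(x in D) f x <= 0.
Proof.
move=> f0; rewrite le0_integralE // oppe_le0.
by apply: integral_ge0 => x Dx; rewrite oppe_ge0 f0.
Qed.

End integral_le.

Lemma le0_integral_image_measure d1 d2 (X : measurableType d1)
    (Y : measurableType d2) (R : realType) (mu : measure X R) (nu : measure Y R)
    (phi : X -> Y) (f : Y -> \bar R) :
  measurable_fun setT phi -> (forall B, measurable B -> nu B = mu (phi @^-1` B)) ->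
  measurable_fun setT f -> (forall y, (f y <= 0)%E) ->
  (\int[nu]_y f y = \int[mu]_x f (phi x))%E.
Proof.
move=> mphi nuE mf f0.
rewrite (eq_measure_integral (pushforward mu phi)); last by move=> B mB _; exact: nuE.
rewrite [LHS]le0_integralE // [RHS]le0_integralE //; congr (- _)%E.
rewrite ge0_integral_pushforward // => [|y _]; first exact: measurableT_comp.
by rewrite oppe_ge0.
Qed.

Lemma integrable_of_affine_bound d (T : measurableType d) (R : realType)
    (mu : {finite_measure set T -> \bar R}) (w F : T -> R) (a b : R) :
  mu.-integrable setT (fun x => (w x)%:E) -> measurable_fun setT F ->
  (forall x, `|F x| <= a + b * w x) -> mu.-integrable setT (fun x => (F x)%:E).
Proof.
move=> intw mF Fle; apply: (le_integrable _ _ _ (g := fun x => (a + b * w x)%:E)) => //.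
- exact/measurable_EFinP.
- by move=> x _; rewrite !abse_EFin lee_fin (le_trans (Fle x)) ?ler_norm.
have -> : (fun x => (a + b * w x)%:E) = (fun x => a%:E + b%:E * (w x)%:E)%E.
  by apply/funext => x; rewrite EFinD EFinM.
apply: integrableD => //; first exact: finite_measure_integrable_cst.
exact: integrableZl.
Qed.

Lemma ae_le_of_integral_cyl_le d1 d2 (T1 : measurableType d1)
    (T2 : measurableType d2) (R : realType)
    (mu : {finite_measure set (T1 * T2)%type -> \bar R}) (h : T1 -> \bar R) (f : T1 -> R) :
  measurable_fun setT h -> measurable_fun setT f ->
  mu.-integrable setT (fun p => (f p.1)%:E) ->
  (forall A, measurable A ->
    (\int[mu]_(p in A `*` setT) h p.1 <= \int[mu]_(p in A `*` setT) (f p.1)%:E)%E) ->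
  {ae mu, forall p, (h p.1 <= (f p.1)%:E)%E}.
Proof.
move=> mh mf intf hle.
pose gap k := [set x | ((f x + k.+1%:R^-1)%:E < h x)%E].
have mgap k : measurable (gap k).
  rewrite -[gap k]setTI; apply: measurable_lte => //.
  by apply/measurable_EFinP; apply: measurable_funD.
have gap_null k : mu (gap k `*` setT) = 0.
  have mB : measurable (gap k `*` [set: T2]) by exact: measurableX.
  set e : R := k.+1%:R^-1; have e0 : 0 < e by rewrite invr_gt0.
  have intfB := integrableS measurableT mB (@subsetT _ _) intf.
  have : (\int[mu]_(p in gap k `*` setT) ((f p.1)%:E + e%:E) <=
          \int[mu]_(p in gap k `*` setT) (f p.1)%:E)%E.
    apply: le_trans (hle _ (mgap k)); apply: le_measurable_integral => //.
    - apply/measurable_funTS/measurable_EFinP; apply: measurable_funD => //.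
      exact: measurableT_comp mf measurable_fst.
    - exact/measurable_funTS/measurableT_comp.
    - by move=> p /set_mem [/= ? _]; rewrite -EFinD ltW.
  rewrite integralD //; last exact: finite_measure_integrable_cst.
  rewrite integral_cst // -[leRHS]adde0 leeD2lE ?(integrable_fin_num mB) //.
  by rewrite pmule_rle0 ?lte_fin // => ?; apply/le_anti; rewrite measure_ge0 andbT.
apply: (@negligibleS _ _ _ mu (\bigcup_k (gap k `*` setT))); last first.
  apply: negligible_bigcup => k; exists (gap k `*` setT).
  by split => //; [exact: measurableX | exact: gap_null].
move=> p /= /negP; rewrite -ltNge; case hp : (h p.1) => [r| |] //=; last first.
  by move=> _; exists 0%N => //; split => //=; rewrite /gap /= hp ltry.
rewrite lte_fin -subr_gt0 => /exists_invn_lt[k hk]; exists k => //; split => //=.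
by rewrite /gap /= hp lte_fin -ltrBrDl.
Qed.

Section nat_valued.
Context d d' (T : measurableType d) (U : measurableType d').

Lemma measurable_fun_nat_level (k : T -> nat) (a : nat -> U) :
  (forall n, measurable (k @^-1` [set n])) -> measurable_fun setT (a \o k).
Proof.
move=> mk _ Y mY; rewrite setTI.
have -> : (a \o k) @^-1` Y = \bigcup_(n in [set n | Y (a n)]) k @^-1` [set n].
  by apply/seteqP; split => [x Yx | x [n /= Yn kxn]]; [exists (k x) | rewrite kxn].
by apply: bigcup_measurable => n _; exact: mk.
Qed.

Lemma measurable_truncn_level (R : realType) (f : T -> R) n :
  measurable_fun setT f -> (forall x, 0 <= f x) ->
  measurable ((fun x => Num.truncn (f x)) @^-1` [set n]).
Proof.
move=> mf f0.
have -> : (fun x => Num.truncn (f x)) @^-1` [set n] = setT `&` f @^-1` `[n%:R, n.+1%:R[.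
  apply/seteqP; split => x /=.
    by move=> nE; split => //; rewrite in_itv /= -nE truncn_itv.
  rewrite in_itv /= => -[_ /andP[nf fn]]; apply/eqP; rewrite eqn_leq.
  by rewrite -ltnS truncn_lt_nat ?truncn_ge_nat ?nf ?fn ?f0.
exact: mf measurableT _ (measurable_itv _).
Qed.

End nat_valued.

Section nonincreasing_limit.
Local Open Scope ereal_scope.
Context d (T : measurableType d) (R : realType) (mu : measure T R).
Variables (psi : nat -> T -> R) (phi : T -> \bar R).
Hypothesis int_psi : forall N, mu.-integrable setT (fun x => (psi N x)%:E).
Hypothesis psi_nonincreasing : forall N x, (psi N.+1 x <= psi N x)%R.
Hypothesis psi_cvg : forall x, (psi N x)%:E @[N --> \oo] --> phi x.

Let psi_le n m x : (n <= m)%N -> (psi m x <= psi n x)%R.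
Proof.
have /nonincreasing_seqP : forall N, (psi N.+1 x <= psi N x)%O by [].
exact.
Qed.

Let measurable_psi N : measurable_fun setT (psi N).
Proof. by apply/measurable_EFinP; exact: measurable_int (int_psi N). Qed.

Let fin_int_psi N : \int[mu]_x (psi N x)%:E \is a fin_num.
Proof. exact: integrable_fin_num. Qed.

Let gap_cvg x : (psi 0 x - psi N x)%:E @[N --> \oo] --> (psi 0 x)%:E - phi x.
Proof.
under eq_fun do rewrite EFinB.
by apply: cvgeB; [exact: fin_num_adde_defr | exact: cvg_cst | exact: psi_cvg].
Qed.

Lemma integral_nonincreasing_gap :
  \int[mu]_x ((psi 0 x)%:E - phi x) =
  limn (fun N => \int[mu]_x (psi 0 x)%:E - \int[mu]_x (psi N x)%:E).
Proof.
have gap_ge0 N x : 0 <= (psi 0 x - psi N x)%:E by rewrite lee_fin subr_ge0 psi_le.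
have gap_nd x : {homo (fun N => (psi 0 x - psi N x)%:E) : n m / (n <= m)%N >-> n <= m}.
  by move=> n m nm; rewrite lee_fin lerB // psi_le.
have mgap N : measurable_fun setT (fun x => (psi 0 x - psi N x)%:E).
  by apply/measurable_EFinP; apply: measurable_funB.
rewrite (eq_integral (fun x => limn (fun N => (psi 0 x - psi N x)%:E))); last first.
  by move=> x _; rewrite (cvg_lim _ (@gap_cvg x)).
rewrite monotone_convergence //; congr (limn _); apply/funext => N.
by rewrite -integralB.
Qed.

Lemma le_integral_nonincreasing_lim a :
  (forall N, a <= \int[mu]_x (psi N x)%:E) -> a <= \int[mu]_x phi x.
Proof.
case: a => [r| |] a_le; last by rewrite leNye.
  2: by have := fin_int_psi 0; rewrite fin_numE -leye_eq (a_le 0%N) andbF.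
set I0 := \int[mu]_x (psi 0 x)%:E.
have mphi : measurable_fun setT phi.
  apply: (emeasurable_fun_cvg (fun N x => (psi N x)%:E)) => [N|x _].
    exact/measurable_EFinP.
  exact: psi_cvg.
have mgap : measurable_fun setT (fun x => (psi 0 x)%:E - phi x).
  by apply: emeasurable_funB => //; exact/measurable_EFinP.
have gap_ge0 x : 0 <= (psi 0 x)%:E - phi x.
  rewrite -(cvg_lim _ (@gap_cvg x)) //; apply: lime_ge.
    by apply/cvg_ex; eexists; exact: (@gap_cvg x).
  by near=> N; rewrite lee_fin subr_ge0 psi_le.
have gap_le : \int[mu]_x ((psi 0 x)%:E - phi x) <= I0 - r%:E.
  rewrite integral_nonincreasing_gap; apply: lime_le.
    apply: ereal_nondecreasing_is_cvgn => n m nm; apply: leeB => //.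
    by apply: le_integral => // x _; rewrite lee_fin psi_le.
  by near=> N; apply: leeB.
have int_gap : mu.-integrable setT (fun x => (psi 0 x)%:E - phi x).
  apply/integrableP; split => //.
  under eq_integral => x _ do rewrite gee0_abs //.
  by apply: le_lt_trans gap_le _; rewrite ltey_eq fin_numB fin_int_psi.
rewrite (eq_integral (fun x => (psi 0 x)%:E - ((psi 0 x)%:E - phi x))); last first.
  by move=> x _; rewrite oppeB ?addeA ?subee ?add0e //; exact: fin_num_adde_defl.
rewrite integralB // -/I0.
have finJ := integrable_fin_num measurableT int_gap.
move: gap_le; rewrite -(fineK finJ) -[I0](fineK (fin_int_psi 0)) -!EFinB !lee_fin.
lra.
Unshelve. all: by end_near.
Qed.

End nonincreasing_limit.

(** * The cost and phi_G *)

Section cost.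
Variable R : realType.
Implicit Types (x y z : R * R) (G : set (R * R)).

Lemma cstC x y : cst x y = cst y x.
Proof. by rewrite /cst; ring. Qed.

Lemma cstxx x : cst x x = 0.
Proof. by rewrite /cst subrr mul0r. Qed.

Lemma cstB z x y :
  cst z y - cst x y = cst z x + (x.1 - z.1) * (y.2 - x.2) + (x.2 - z.2) * (y.1 - x.1).
Proof. by rewrite /cst; ring. Qed.

Lemma cst_le_near w z x (e : R) : 0 < e -> e <= 1 ->
  `|w.1 - z.1| < e -> `|w.2 - z.2| < e ->
  cst w x <= cst z x + e * (`|z.1 - x.1| + `|z.2 - x.2| + 1).
Proof.
move=> e0 e1 /ltW h1 /ltW h2.
have -> : cst w x = cst z x + (z.1 - x.1) * (w.2 - z.2)
    + (w.1 - z.1) * (z.2 - x.2) + (w.1 - z.1) * (w.2 - z.2) by rewrite /cst; ring.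
have t1 : (z.1 - x.1) * (w.2 - z.2) <= `|z.1 - x.1| * e.
  by apply: le_trans (ler_norm _) _; rewrite normrM ler_wpM2l.
have t2 : (w.1 - z.1) * (z.2 - x.2) <= e * `|z.2 - x.2|.
  by apply: le_trans (ler_norm _) _; rewrite normrM ler_wpM2r.
have t3 : (w.1 - z.1) * (w.2 - z.2) <= e.
  apply: le_trans (ler_norm _) _; rewrite normrM -[leRHS]mulr1.
  by apply: ler_pM => //; apply: le_trans h2 e1.
lra.
Qed.

Lemma phiG_le_cst G z x : G z -> (phiG G x <= (cst z x)%:E)%E.
Proof. by move=> Gz; apply: ereal_inf_lbound; exists z. Qed.

Lemma phiG_le0 G x : maximal_monotone G -> (phiG G x <= 0)%E.
Proof.
move=> [monoG maxG]; rewrite leNgt; apply/negP => phiG_gt0.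
have cst_gt0 z : G z -> 0 < cst z x.
  by move=> Gz; rewrite -lte_fin (lt_le_trans phiG_gt0) ?phiG_le_cst.
have monoGx : monotone_set (G `|` [set x]).
  move=> r s [Gr|->] [Gs|->]; rewrite ?cstxx //; first exact: monoG.
    exact/ltW/cst_gt0.
  by rewrite cstC; exact/ltW/cst_gt0.
have Gx : G x by rewrite -(maxG _ monoGx (@subsetUl _ G [set x])); right.
by have := cst_gt0 x Gx; rewrite cstxx ltxx.
Qed.

Lemma maximal_monotone_neq0 G : maximal_monotone G -> G !=set0.
Proof.
move=> maxG; apply/not_existsP => G0; have := phiG_le0 (0, 0) maxG; rewrite /phiG.
suff -> : [set (cst z (0, 0))%:E | z in G] = set0 by rewrite ereal_inf0.
by apply/seteqP; split => // y [z Gz _]; apply: (G0 z).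
Qed.

End cost.

Section dense_seq.
Variables (R : realType) (S : set (R * R)) (z0 : R * R).
Hypothesis Sz0 : S z0.

(* One point of [S] in each box of rational centre and radius [1/(k+1)] that
   meets [S], enumerated through [pickle]; [z0] fills the remaining indices. *)
Definition rat_box (q : rat * rat * nat) : set (R * R) :=
  [set z | S z /\ `|z.1 - ratr q.1.1| < q.2.+1%:R^-1 /\
                  `|z.2 - ratr q.1.2| < q.2.+1%:R^-1].

Definition dense_seq (n : nat) : R * R :=
  if unpickle n is Some q then xget z0 (rat_box q) else z0.

Lemma dense_seq_in n : S (dense_seq n).
Proof.
rewrite /dense_seq; case: (unpickle n) => [q|//].
have [[z qz]|nq] := pselect (rat_box q !=set0).
  by have [] := xgetPex z0 (ex_intro _ _ qz).
by rewrite xgetPN // => z qz; apply: nq; exists z.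
Qed.

Lemma dense_seq_approx z e : S z -> 0 < e ->
  exists n, `|(dense_seq n).1 - z.1| < e /\ `|(dense_seq n).2 - z.2| < e.
Proof.
move=> Sz e0; set k := Num.truncn (2 / e); set r : R := k.+1%:R^-1.
have r0 : 0 < r by rewrite invr_gt0.
have r2 : 2 * r < e.
  by rewrite -ltr_pdivlMr // /r invrK mulrC -ltr_pdivrMr // truncnS_gt.
have [q1] := @rat_in_itvoo R (z.1 - r) (z.1 + r) ltac:(lra).
have [q2] := @rat_in_itvoo R (z.2 - r) (z.2 + r) ltac:(lra).
rewrite !in_itv /= => /andP[a2 b2] /andP[a1 b1].
have qz : rat_box (q1, q2, k) z.
  by split => //=; rewrite -/r !ltr_norml; split; apply/andP; split; lra.
exists (pickle (q1, q2, k)); rewrite /dense_seq pickleK.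
have [_ /= [+ +]] : rat_box (q1, q2, k) (xget z0 (rat_box (q1, q2, k))) :=
  xgetPex z0 (ex_intro _ _ qz).
by rewrite -/r !ltr_norml => /andP[c1 d1] /andP[c2 d2]; split; apply/andP; split; lra.
Qed.

Lemma le_phiG_dense_seq x a :
  (forall n, a <= (cst (dense_seq n) x)%:E)%E -> (a <= phiG S x)%E.
Proof.
move=> ha; apply/ereal_infP => _ [z Sz <-]; apply/lee_addgt0Pr => e e0.
set M : R := `|z.1 - x.1| + `|z.2 - x.2| + 1.
have M0 : 0 < M by rewrite /M ltr_pwDr.
set eta : R := Num.min 1 (e / M).
have eta0 : 0 < eta by rewrite lt_min ltr01 divr_gt0.
have eta1 : eta <= 1 by rewrite ge_min lexx.
have etaM : eta * M <= e by rewrite -ler_pdivlMr // ge_min lexx orbT.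
have [n [h1 h2]] := dense_seq_approx Sz eta0.
apply: le_trans (ha n) _; rewrite lee_fin.
by apply: le_trans (cst_le_near x eta0 eta1 h1 h2) _; rewrite -/M; lra.
Qed.

End dense_seq.

(** * Martingale couplings *)

Section linear_growth.
Variable R : realType.

Definition linearly_bounded (K : R) (phi : R * R -> R) :=
  forall x, `|phi x| <= K + `|x.1| + `|x.2|.

Lemma sqr_le_linearly_bounded K phi x : 0 <= K -> linearly_bounded K phi ->
  phi x ^+ 2 <= 3 * K ^+ 2 + 3 * (x.1 ^+ 2 + x.2 ^+ 2).
Proof.
move=> K0 /(_ x); rewrite -(real_normK (num_real (phi x))).
rewrite -(real_normK (num_real x.1)) -(real_normK (num_real x.2)).
have := normr_ge0 (phi x); have := normr_ge0 x.1; have := normr_ge0 x.2.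
set u := `|phi x|; set a := `|x.1|; set b := `|x.2| => b0 a0 u0 uK.
have : u ^+ 2 <= (K + a + b) ^+ 2 by rewrite ler_sqr ?nnegrE ?addr_ge0.
have := sqr_ge0 (K - a); have := sqr_ge0 (K - b); have := sqr_ge0 (a - b); nra.
Qed.

Lemma linearly_bounded_ge K phi psi : (forall x, `|phi x| <= `|psi x|) ->
  linearly_bounded K psi -> linearly_bounded K phi.
Proof. by move=> le_phi psiK x; apply: le_trans (le_phi x) (psiK x). Qed.

End linear_growth.

Section martingale.
Variables (R : realType) (g : probability ((R * R) * (R * R))%type R).
Hypothesis g_P2 : P2_2 g.
Hypothesis g_mart1 : cond_exp_x g (fun p => (p.2.1)%:E) (fun x => (x.1)%:E).
Hypothesis g_mart2 : cond_exp_x g (fun p => (p.2.2)%:E) (fun x => (x.2)%:E).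

Local Notation T2 := (R * R)%type.
Local Notation Tp := ((R * R) * (R * R))%type.

Definition coord (b : bool) (x : T2) : R := if b then x.1 else x.2.

Definition incr (b : bool) (p : Tp) : R := coord b p.2 - coord b p.1.

Definition moment2 (p : Tp) : R :=
  p.1.1 ^+ 2 + p.1.2 ^+ 2 + p.2.1 ^+ 2 + p.2.2 ^+ 2.

Lemma measurable_coord b : measurable_fun setT (coord b).
Proof. by case: b; [exact: measurable_fst | exact: measurable_snd]. Qed.

Lemma measurable_incr b : measurable_fun setT (incr b).
Proof.
apply: measurable_funB; apply: measurableT_comp (measurable_coord b) _.
  exact: measurable_snd.
exact: measurable_fst.
Qed.

Lemma sqr_coord_le b x : coord b x ^+ 2 <= x.1 ^+ 2 + x.2 ^+ 2.
Proof. by case: b => /=; [rewrite lerDl | rewrite lerDr]; exact: sqr_ge0. Qed.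

Lemma moment2_ge_fst p : p.1.1 ^+ 2 + p.1.2 ^+ 2 <= moment2 p.
Proof. by rewrite /moment2 -addrA lerDl addr_ge0 ?sqr_ge0. Qed.

Lemma moment2_ge_snd p : p.2.1 ^+ 2 + p.2.2 ^+ 2 <= moment2 p.
Proof. by rewrite /moment2 -addrA lerDr !addr_ge0 ?sqr_ge0. Qed.

Lemma sqr_incr_le b p : incr b p ^+ 2 <= 2 * moment2 p.
Proof.
have := sqr_coord_le b p.1; have := sqr_coord_le b p.2.
have := sqrB_le (coord b p.2) (coord b p.1); rewrite /incr /moment2; lra.
Qed.

Lemma integrable_coord b (s : Tp -> T2) : measurable_fun setT s ->
  (forall p, (s p).1 ^+ 2 + (s p).2 ^+ 2 <= moment2 p) ->
  g.-integrable setT (fun p => (coord b (s p))%:E).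
Proof.
move=> ms s_le; apply: (integrable_of_affine_bound (a := 1) (b := 1) g_P2).
  exact: measurableT_comp (measurable_coord b) ms.
move=> p; rewrite -/(moment2 p) (le_trans (normr_le_sqrD1 _)) // mul1r lerD2l.
exact: le_trans (sqr_coord_le _ _) (s_le p).
Qed.

Lemma integrable_mul_incr b phi K : 0 <= K -> measurable_fun setT phi ->
  linearly_bounded K phi -> g.-integrable setT (fun p => (phi p.1 * incr b p)%:E).
Proof.
move=> K0 mphi phiK.
apply: (integrable_of_affine_bound (a := 3 * K ^+ 2) (b := 5) g_P2).
  apply: measurable_funM (measurable_incr b).
  exact: measurableT_comp mphi measurable_fst.
move=> p; apply: le_trans (normrM_le_sqr _ _) _.
have := sqr_le_linearly_bounded p.1 K0 phiK; have := sqr_incr_le b p.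
have := moment2_ge_fst p; rewrite -/(moment2 p); lra.
Qed.

Lemma integrable_incr b : g.-integrable setT (fun p => (incr b p)%:E).
Proof.
apply: (integrable_of_affine_bound (a := 1) (b := 2) g_P2 (measurable_incr b)) => p.
by rewrite -/(moment2 p) (le_trans (normr_le_sqrD1 _)) // lerD2l sqr_incr_le.
Qed.

Lemma integral_cyl_incr b A : measurable A ->
  (\int[g]_(p in A `*` setT) (incr b p)%:E = 0)%E.
Proof.
move=> mA; have mAT : measurable (A `*` [set: T2]) by exact: measurableX.
have [_ coordE] : cond_exp_x g (fun p => (coord b p.2)%:E) (fun x => (coord b x)%:E).
  by case: b.
have int_coord (s : Tp -> T2) : measurable_fun setT s ->
    (forall p, (s p).1 ^+ 2 + (s p).2 ^+ 2 <= moment2 p) ->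
    g.-integrable (A `*` setT) (fun p => (coord b (s p))%:E).
  by move=> ms s_le; apply: integrableS measurableT mAT _ (integrable_coord b ms s_le).
rewrite (eq_integral (fun p => (coord b p.2)%:E - (coord b p.1)%:E)%E); last first.
  by move=> p _; rewrite EFinB.
rewrite integralB //; last 2 first.
- exact: int_coord measurable_snd moment2_ge_snd.
- exact: int_coord measurable_fst moment2_ge_fst.
rewrite coordE // subee // integrable_fin_num //.
exact: int_coord measurable_fst moment2_ge_fst.
Qed.

Lemma integral_mul_incr_level b (k : T2 -> nat) (a : nat -> R) K :
  (forall n, measurable (k @^-1` [set n])) -> 0 <= K ->
  linearly_bounded K (a \o k) -> (\int[g]_p (a (k p.1) * incr b p)%:E = 0)%E.
Proof.
move=> mk K0 aK; pose B n := k @^-1` [set n] `*` [set: T2].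
have mB n : measurable (B n) by exact: measurableX.
have covB : [set: Tp] = \bigcup_n B n by apply/seteqP; split => p // _; exists (k p.1).
rewrite covB integral_bigcup //; last 2 first.
- by move=> i j _ _ [p [[/= <- _] [/= <- _]]].
- by rewrite -covB; exact: integrable_mul_incr (measurable_fun_nat_level a mk) aK.
apply: eseries0 => n _ _.
rewrite (eq_integral (fun p => (a n)%:E * (incr b p)%:E)%E); last first.
  by move=> p /set_mem [/= -> _]; rewrite EFinM.
rewrite integralZl //; last exact: integrableS measurableT (mB n) _ (integrable_incr b).
by rewrite integral_cyl_incr ?mule0.
Qed.

Lemma abse_integral_mul_incr_le b phi K e : 0 <= K -> measurable_fun setT phi ->
  linearly_bounded K phi -> (forall x, `|phi x| <= e) ->
  (`|\int[g]_p (phi p.1 * incr b p)%:E| <= e%:E * \int[g]_p `|(incr b p)%:E|)%E.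
Proof.
move=> K0 mphi phiK phie; have e0 : 0 <= e := le_trans (normr_ge0 _) (phie 0).
have int_phi := integrable_mul_incr b K0 mphi phiK.
apply: le_trans (le_abse_integral _ measurableT (measurable_int _ int_phi)) _.
rewrite -integralZl //; last exact: integrable_abse (integrable_incr b).
apply: ge0_le_integral => //.
- by apply: measurableT_comp => //; exact: measurable_int int_phi.
- apply: emeasurable_funM => //; apply: measurableT_comp => //.
  by apply/measurable_EFinP; exact: measurable_incr.
- by move=> p _; rewrite !abse_EFin -EFinM lee_fin normrM ler_wpM2r.
Qed.

Lemma abse_integral_mul_incr_le_invn b phi K m : 0 <= K -> measurable_fun setT phi ->
  linearly_bounded K phi -> (forall x, 0 <= phi x) ->
  (`|\int[g]_p (phi p.1 * incr b p)%:E| <=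
     m.+1%:R^-1%:E * \int[g]_p `|(incr b p)%:E|)%E.
Proof.
move=> K0 mphi phiK phi0.
(* [floor] is a step function of [x], so it contributes nothing, and it is
   uniformly within [1/(m+1)] of [phi]. *)
pose k x := Num.truncn (m.+1%:R * phi x).
pose floor x : R := (k x)%:R / m.+1%:R.
have floor_approx x := truncn_div_approx m (phi0 x).
have mk n : measurable (k @^-1` [set n]).
  by apply: measurable_truncn_level => [|x]; [exact: measurable_funM | rewrite mulr_ge0].
have mfloor : measurable_fun setT floor.
  exact: (measurable_fun_nat_level (fun n => n%:R / m.+1%:R : R) mk).
have floorK : linearly_bounded K floor.
  apply: linearly_bounded_ge phiK => x; have [/andP[t0 t_le] _] := floor_approx x.
  by rewrite !ger0_norm.
have gapK : linearly_bounded K (phi \- floor).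
  apply: linearly_bounded_ge phiK => x; have [/andP[t0 t_le] _] := floor_approx x.
  by rewrite !ger0_norm ?subr_ge0 // gerBl.
have mgap : measurable_fun setT (phi \- floor) by exact: measurable_funB.
have gap_le x : `|(phi \- floor) x| <= m.+1%:R^-1.
  by have [/andP[_ t_le] gap_le] := floor_approx x; rewrite ger0_norm ?subr_ge0.
have -> : (\int[g]_p (phi p.1 * incr b p)%:E =
    \int[g]_p (((phi \- floor) p.1 * incr b p)%:E + (floor p.1 * incr b p)%:E))%E.
  by apply: eq_integral => p _; rewrite -EFinD -mulrDl subrK.
rewrite integralD //; last 2 first.
- exact: integrable_mul_incr gapK.
- exact: integrable_mul_incr floorK.
rewrite (integral_mul_incr_level (a := fun n => n%:R / m.+1%:R) b mk K0 floorK) adde0.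
by have := abse_integral_mul_incr_le b K0 mgap gapK gap_le.
Qed.

Lemma integral_mul_incr_ge0 b phi K : 0 <= K -> measurable_fun setT phi ->
  linearly_bounded K phi -> (forall x, 0 <= phi x) ->
  (\int[g]_p (phi p.1 * incr b p)%:E = 0)%E.
Proof.
move=> K0 mphi phiK phi0.
have finI := integrable_fin_num measurableT (integrable_mul_incr b K0 mphi phiK).
have finC := integrable_fin_num measurableT (integrable_abse (integrable_incr b)).
rewrite -(fineK finI); congr EFin; apply/eqP; rewrite -normr_le0.
apply: (le0_of_le_invn (C := fine (\int[g]_p `|(incr b p)%:E|)%E)) => m.
have := abse_integral_mul_incr_le_invn b m K0 mphi phiK phi0.
by rewrite -(fineK finI) -(fineK finC) -EFinM abse_EFin lee_fin.
Qed.

Lemma integral_mul_incr b phi K : 0 <= K -> measurable_fun setT phi ->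
  linearly_bounded K phi -> (\int[g]_p (phi p.1 * incr b p)%:E = 0)%E.
Proof.
move=> K0 mphi phiK.
have partK psi : (forall x, 0 <= psi x <= `|phi x|) -> linearly_bounded K psi.
  move=> psi_le; apply: linearly_bounded_ge phiK => x.
  by have /andP[psi0 psi_le_phi] := psi_le x; rewrite ger0_norm // normr_id.
have normE x : `|phi x| = phi^\+ x + phi^\- x.
  by have /(congr1 (fun h => h x)) := funrposDneg phi.
have posK : linearly_bounded K phi^\+.
  by apply: partK => x; rewrite funrpos_ge0 normE lerDl funrneg_ge0.
have negK : linearly_bounded K phi^\-.
  by apply: partK => x; rewrite funrneg_ge0 normE lerDr funrpos_ge0.
have mpos := measurable_funrpos mphi; have mneg := measurable_funrneg mphi.
rewrite (eq_integral (fun p => (phi^\+ p.1 * incr b p)%:E - (phi^\- p.1 * incr b p)%:E)%E).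
  rewrite integralB //; last 2 first.
  - exact: integrable_mul_incr K0 mpos posK.
  - exact: integrable_mul_incr K0 mneg negK.
  rewrite (integral_mul_incr_ge0 b K0 mpos posK (funrpos_ge0 phi)).
  by rewrite (integral_mul_incr_ge0 b K0 mneg negK (funrneg_ge0 phi)) subee.
have phiE x : phi x = phi^\+ x - phi^\- x.
  by have /(congr1 (fun h => h x)) := funrposBneg phi.
by move=> p _; rewrite -EFinB -mulrBl -phiE.
Qed.

Lemma integral_cyl_mul_incr b phi K A : measurable A -> 0 <= K ->
  measurable_fun setT phi -> linearly_bounded K phi ->
  (\int[g]_(p in A `*` setT) (phi p.1 * incr b p)%:E = 0)%E.
Proof.
move=> mA K0 mphi phiK.
rewrite integral_mkcond (eq_integral (fun p => ((phi \* \1_A) p.1 * incr b p)%:E)).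
  apply: (integral_mul_incr _ K0); first exact: measurable_funM.
  apply: linearly_bounded_ge phiK => x.
  by rewrite /= indicE normrM; case: (x \in A); rewrite ?normr1 ?normr0 ?mulr1 ?mulr0.
move=> p _; rewrite patchE /= indicE.
case: (boolP (p \in A `*` setT)) => [/set_mem [Ap _] | nApT].
  by rewrite mem_set // mulr1.
by rewrite memNset ?mulr0 ?mul0r // => Ap; move: nApT; rewrite mem_set.
Qed.

Lemma integrable_cpair : g.-integrable setT (@cpair R).
Proof.
apply: (integrable_of_affine_bound (a := 0) (b := 4) g_P2).
  apply: measurable_funM; apply: measurable_funB.
  - exact: measurableT_comp measurable_fst measurable_fst.
  - exact: measurableT_comp measurable_fst measurable_snd.
  - exact: measurableT_comp measurable_snd measurable_fst.
  - exact: measurableT_comp measurable_snd measurable_snd.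
move=> p; rewrite -/(moment2 p) add0r.
have -> : cst p.1 p.2 = incr true p * incr false p by rewrite /cst /incr /=; ring.
apply: le_trans (normrM_le_sqr _ _) _.
by have := sqr_incr_le true p; have := sqr_incr_le false p; lra.
Qed.

Section bounded_selection.
Variables (s : T2 -> T2) (K : R).
Hypothesis ms : measurable_fun setT s.
Hypothesis s_le : forall x, `|(s x).1| + `|(s x).2| <= K.

Lemma integrable_cst_selection (t : Tp -> T2) : measurable_fun setT t ->
  (forall p, (t p).1 ^+ 2 + (t p).2 ^+ 2 <= moment2 p) ->
  g.-integrable setT (fun p => (cst (s p.1) (t p))%:E).
Proof.
move=> mt t_le; apply: (integrable_of_affine_bound (a := 2 * K ^+ 2) (b := 2) g_P2).
  have ms1 := measurableT_comp ms (@measurable_fst _ _ T2 T2).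
  apply: measurable_funM; apply: measurable_funB.
  - exact: measurableT_comp measurable_fst ms1.
  - exact: measurableT_comp measurable_fst mt.
  - exact: measurableT_comp measurable_snd ms1.
  - exact: measurableT_comp measurable_snd mt.
move=> p; rewrite -/(moment2 p); apply: le_trans (normrM_le_sqr _ _) _.
have K_ge : (s p.1).1 ^+ 2 + (s p.1).2 ^+ 2 <= K ^+ 2.
  rewrite -(real_normK (num_real (s p.1).1)) -(real_normK (num_real (s p.1).2)).
  have := s_le p.1; have := normr_ge0 (s p.1).1; have := normr_ge0 (s p.1).2; nra.
have := sqrB_le (s p.1).1 (t p).1; have := sqrB_le (s p.1).2 (t p).2.
have := t_le p; lra.
Qed.

Lemma integral_cyl_cst_shift A : measurable A ->
  (\int[g]_(p in A `*` setT) ((cst (s p.1) p.2)%:E - cpair p) =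
   \int[g]_(p in A `*` setT) (cst (s p.1) p.1)%:E)%E.
Proof.
move=> mA; have mAT : measurable (A `*` [set: T2]) by exact: measurableX.
have intAT F : g.-integrable setT F -> g.-integrable (A `*` setT) F.
  exact: integrableS measurableT mAT (@subsetT _ _).
pose f1 x := x.1 - (s x).1; pose f2 x := x.2 - (s x).2.
have K0 : 0 <= K by apply: le_trans (s_le 0); rewrite addr_ge0.
have f1K : linearly_bounded K f1.
  move=> x; apply: le_trans (ler_normB _ _) _; have := s_le x.
  by have := normr_ge0 (s x).2; have := normr_ge0 x.2; lra.
have f2K : linearly_bounded K f2.
  move=> x; apply: le_trans (ler_normB _ _) _; have := s_le x.
  by have := normr_ge0 (s x).1; have := normr_ge0 x.1; lra.
have mf1 : measurable_fun setT f1.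
  by apply: measurable_funB => //; exact: measurableT_comp measurable_fst ms.
have mf2 : measurable_fun setT f2.
  by apply: measurable_funB => //; exact: measurableT_comp measurable_snd ms.
have int1 := intAT _ (integrable_mul_incr false K0 mf1 f1K).
have int2 := intAT _ (integrable_mul_incr true K0 mf2 f2K).
rewrite (eq_integral (fun p => (cst (s p.1) p.1)%:E +
    ((f1 p.1 * incr false p)%:E + (f2 p.1 * incr true p)%:E)))%E; last first.
  by move=> p _; rewrite /cpair -EFinB cstB -!EFinD -addrA.
rewrite integralD //; last 2 first.
- by apply/intAT/integrable_cst_selection; [exact: measurable_fst | exact: moment2_ge_fst].
- exact: integrableD.
rewrite integralD // (integral_cyl_mul_incr _ mA K0 mf1 f1K).
by rewrite (integral_cyl_mul_incr _ mA K0 mf2 f2K) !adde0.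
Qed.

End bounded_selection.

End martingale.

(** * Approximation of phi_G and proof of the theorem *)

Section phiG_approx.
Variables (R : realType) (G : set (R * R)).
Hypothesis maxG : maximal_monotone G.
Local Notation T2 := (R * R)%type.

Definition dense_pt : nat -> T2 := dense_seq G (xget (0, 0) G).

Lemma dense_pt_in n : G (dense_pt n).
Proof. by apply: dense_seq_in; exact: xgetPex (maximal_monotone_neq0 maxG). Qed.

Lemma le_phiG_dense_pt x a :
  (forall n, a <= (cst (dense_pt n) x)%:E)%E -> (a <= phiG G x)%E.
Proof. exact: le_phiG_dense_seq. Qed.

Fixpoint argmin_dense (N : nat) (x : T2) : T2 :=
  if N is N'.+1 then
    if cst (dense_pt N) x < cst (argmin_dense N' x) x then dense_pt N
    else argmin_dense N' x
  else dense_pt 0.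

Definition phiG_approx N x := cst (argmin_dense N x) x.

Definition argmin_bound N : R := \sum_(i < N.+1) (`|(dense_pt i).1| + `|(dense_pt i).2|).

Lemma argmin_dense_in N x : exists2 i, (i <= N)%N & argmin_dense N x = dense_pt i.
Proof.
elim: N => [|N [i iN IH]] /=; first by exists 0%N.
by rewrite IH; case: ifP => _; [exists N.+1 | exists i => //; exact: leqW].
Qed.

Lemma argmin_dense_inG N x : G (argmin_dense N x).
Proof. by have [i _ ->] := argmin_dense_in N x; exact: dense_pt_in. Qed.

Lemma argmin_dense_le N x :
  `|(argmin_dense N x).1| + `|(argmin_dense N x).2| <= argmin_bound N.
Proof.
have [i iN ->] := argmin_dense_in N x.
rewrite /argmin_bound (bigD1 (Ordinal (iN : (i < N.+1)%N))) //= lerDl.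
by apply: sumr_ge0 => j _; rewrite addr_ge0.
Qed.

Lemma phiG_approx_nonincreasing N x : phiG_approx N.+1 x <= phiG_approx N x.
Proof. by rewrite /phiG_approx /=; case: ifPn => [/ltW //|]. Qed.

Lemma phiG_approx_le N x : phiG_approx N x <= cst (dense_pt N) x.
Proof.
by case: N => [|N] //; rewrite /phiG_approx /=; case: ifPn => //; rewrite -leNgt.
Qed.

Lemma phiG_le_approx N x : (phiG G x <= (phiG_approx N x)%:E)%E.
Proof. exact/phiG_le_cst/argmin_dense_inG. Qed.

Lemma measurable_cst_selection (s : T2 -> T2) : measurable_fun setT s ->
  measurable_fun setT (fun x => cst (s x) x).
Proof.
move=> ms; apply: measurable_funM; apply: measurable_funB.
- exact: measurableT_comp measurable_fst ms.
- exact: measurable_fst.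
- exact: measurableT_comp measurable_snd ms.
- exact: measurable_snd.
Qed.

Lemma measurable_argmin_dense N : measurable_fun setT (argmin_dense N).
Proof.
elim: N => [|N IH]; first exact: measurable_cst.
apply: measurable_fun_ifT; [|exact: measurable_cst|exact: IH].
apply: measurable_fun_ltr; last exact: measurable_cst_selection.
exact: (@measurable_cst_selection (fun=> dense_pt N.+1) (measurable_cst _)).
Qed.

Lemma phiG_approx_cvg x : (phiG_approx N x)%:E @[N --> \oo] --> phiG G x.
Proof.
suff <- : ereal_inf (range (fun N => (phiG_approx N x)%:E)) = phiG G x.
  apply: ereal_nonincreasing_cvgn; apply/nonincreasing_seqP => N.
  by rewrite lee_fin phiG_approx_nonincreasing.
apply/le_anti/andP; split; last by apply/ereal_infP => _ [N _ <-]; exact: phiG_le_approx.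
apply: le_phiG_dense_pt => n; apply: le_trans (ereal_inf_lbound _) _; first by exists n.
by rewrite lee_fin phiG_approx_le.
Qed.

Lemma measurable_phiG : measurable_fun setT (phiG G).
Proof.
apply: (emeasurable_fun_cvg (fun N x => (phiG_approx N x)%:E)) => [N|x _].
  by apply/measurable_EFinP; exact: measurable_cst_selection (measurable_argmin_dense N).
exact: phiG_approx_cvg.
Qed.

End phiG_approx.

Section lemma7_parts.
Variables (R : realType) (g : probability ((R * R) * (R * R))%type R).
Variables (G : set (R * R)).
Hypothesis g_P2 : P2_2 g.
Hypothesis g_mart1 : cond_exp_x g (fun p => (p.2.1)%:E) (fun x => (x.1)%:E).
Hypothesis g_mart2 : cond_exp_x g (fun p => (p.2.2)%:E) (fun x => (x.2)%:E).
Hypothesis maxG : maximal_monotone G.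

Lemma cond_exp_phiG_minus_c_le h : cond_exp_x g (phiG_minus_c G) h ->
  {ae g, forall p, (h p.1 <= phiG G p.1)%E}.
Proof.
move=> [mh hE].
suff /ae_foralln : forall n, {ae g, forall p, (h p.1 <= (cst (dense_pt G n) p.1)%:E)%E}.
  by apply: filterS => p; exact: le_phiG_dense_pt.
move=> n; set z := dense_pt G n.
apply: ae_le_of_integral_cyl_le => //.
- exact: (@measurable_cst_selection _ (fun=> z) (measurable_cst _)).
- exact: (integrable_cst_selection (s := fun=> z) g_P2 (measurable_cst _) (fun=> lexx _)
    measurable_fst (@moment2_ge_fst R)).
move=> A mA; have mAT : measurable (A `*` [set: R * R]) by exact: measurableX.
rewrite -hE // -(integral_cyl_cst_shift (s := fun=> z) g_P2 g_mart1 g_mart2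
  (measurable_cst _) (fun=> lexx _) mA).
have mc := measurable_int _ (integrable_cpair g_P2).
apply: le_measurable_integral => //.
- apply: measurable_funTS; apply: emeasurable_funB mc.
  exact: measurableT_comp (measurable_phiG maxG) measurable_snd.
- apply: measurable_funTS; apply: emeasurable_funB mc; apply: measurable_int.
  exact: (integrable_cst_selection (s := fun=> z) g_P2 (measurable_cst _) (fun=> lexx _)
    measurable_snd (@moment2_ge_snd R)).
- by move=> p _; apply: leeB => //; exact: phiG_le_cst (dense_pt_in maxG n).
Qed.

Lemma integral_phiG_snd_sub_le :
  (\int[g]_p phiG G p.2 - \int[g]_p cpair p <= \int[g]_p phiG G p.1)%E.
Proof.
have sel_int (N : nat) (t : _ -> R * R) := integrable_cst_selection g_P2
  (measurable_argmin_dense G N) (argmin_dense_le G N) (t := t).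
apply: (le_integral_nonincreasing_lim (psi := fun N p => phiG_approx G N p.1)).
- by move=> N; exact: sel_int measurable_fst (@moment2_ge_fst R).
- by move=> N p; exact: phiG_approx_nonincreasing.
- by move=> p; exact: phiG_approx_cvg.
move=> N; have int_snd := sel_int N snd measurable_snd (@moment2_ge_snd R).
apply: (@le_trans _ _
  (\int[g]_p (cst (argmin_dense G N p.1) p.2)%:E - \int[g]_p cpair p)%E).
  apply: leeB => //; apply: le_measurable_integral => //.
  - exact: measurableT_comp (measurable_phiG maxG) measurable_snd.
  - exact: measurable_int int_snd.
  - by move=> p _; exact: phiG_le_cst (argmin_dense_inG maxG N p.1).
rewrite -integralB //; last exact: integrable_cpair.
by rewrite -setXTT (integral_cyl_cst_shift g_P2 g_mart1 g_mart2
  (measurable_argmin_dense G N) (argmin_dense_le G N) measurableT).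
Qed.

End lemma7_parts.

Theorem lemma7 (R : realType) (nu : probability (R * R)%type R)
  (g : probability ((R * R) * (R * R))%type R)
  (mu : probability (R * R)%type R) (G : set (R * R)) :
  P2_1 nu -> in_Gamma nu g ->
  (forall A : set (R * R), measurable A -> mu A = g (fst @^-1` A)) ->
  maximal_monotone G ->
  (forall h : R * R -> \bar R,
     cond_exp_x g (phiG_minus_c G) h ->
     {ae g, forall p : (R * R) * (R * R), (h p.1 <= phiG G p.1 <= 0)%E}) /\
  ((\int[nu]_y phiG G y - \int[g]_p cpair p <= \int[mu]_x phiG G x) /\
   \int[mu]_x phiG G x <= 0)%E.
Proof.
move=> _ [g_P2 [nuE [g_mart1 g_mart2]]] muE maxG.
have phiG0 x := phiG_le0 x maxG.
have mphiG := measurable_phiG maxG.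
rewrite (le0_integral_image_measure measurable_snd nuE mphiG phiG0).
rewrite (le0_integral_image_measure measurable_fst muE mphiG phiG0).
split; [|split].
- move=> h /(cond_exp_phiG_minus_c_le g_P2 g_mart1 g_mart2 maxG).
  by apply: filterS => p ->; rewrite phiG0.
- exact: integral_phiG_snd_sub_le.
- by apply: integral_le0 => p _; exact: phiG0.
Qed.
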